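(* Let $(\Lambda_0,\le)$ and $(\Lambda_1,\le)$ be $\aleph_1$-directed posets, and let $(E_{\lambda_0})_{\lambda_0\in\Lambda_0}$ and $(F_{\lambda_1})_{\lambda_1\in\Lambda_1}$ be diagrams in $\mathbf{OSp}$ indexed by them. Then the canonical map \[\varinjlim_{(\lambda_0,\lambda_1)\in\Lambda_0\times\Lambda_1} E_{\lambda_0}\otimes_h F_{\lambda_1}\longrightarrow\Big(\varinjlim_{\lambda_0}E_{\lambda_0}\Big)\otimes_h\Big(\varinjlim_{\lambda_1}F_{\lambda_1}\Big)\] is an isomorphism in $\mathbf{OSp}$.
   Context: $\mathbf{OSp}$ is the category of (not necessarily complete) operator spaces with completely contractive linear maps; colimits are taken in $\mathbf{OSp}$. $\otimes_h$ is the (algebraic, not completed) Haagerup tensor product of operator spaces: for $x\in M_{mn}(E\otimes F)$, $\|x\|_h=\inf\{\|(e_{ij})\|\,\|(f_{jk})\|: (e_{ij})\in M_{mk}(E),(f_{jk})\in M_{kn}(F), (e_{ij})\odot(f_{jk})=x\}$, where $(e_{ij})\odot(f_{jk})=(\sum_j e_{ij}\otimes f_{jk})_{i,k}$. A poset is $\aleph_1$-directed if every countable subset has an upper bound. *)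

From HB Require Import structures.
From mathcomp Require Import all_boot all_order all_algebra.
From mathcomp Require Import complex.
From mathcomp Require Import boolp classical_sets cardinality reals.
Set Implicit Arguments.
Unset Strict Implicit.
Unset Printing Implicit Defensive.
Import Order.TTheory GRing.Theory Num.Theory.
Local Open Scope ring_scope.
Local Open Scope classical_set_scope.

Section OperatorSpaces.
Variable R : realType.
Local Notation C := (complex R).

Definition cabs2 (z : C) : R := complex.Re z ^+ 2 + complex.Im z ^+ 2.
Definition cabs (z : C) : R := Num.sqrt (cabs2 z).
Definition l2norm n (v : 'cV[C]_n) : R := Num.sqrt (\sum_(i < n) cabs2 (v i 0)).

Definition opnorm p m (a : 'M[C]_(p, m)) : R :=
  sup [set l2norm (a *m v) | v in [set v : 'cV[C]_m | l2norm v <= 1]].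

Definition lin (V W : lmodType C) (f : V -> W) : Prop :=
  forall (a : C) (u v : V), f (a *: u + v) = a *: f u + f v.

Definition lmulmx (V : lmodType C) p m n (a : 'M[C]_(p, m)) (x : 'M[V]_(m, n))
  : 'M[V]_(p, n) := \matrix_(i, k) \sum_j a i j *: x j k.
Definition rmulmx (V : lmodType C) m n q (x : 'M[V]_(m, n)) (b : 'M[C]_(n, q))
  : 'M[V]_(m, q) := \matrix_(i, k) \sum_j b j k *: x i j.

(* (abstract) operator spaces, via Ruan's axioms, stated for all
   rectangular matrix levels M_{m,n}(V). Not necessarily complete. *)
Record opspace := OpSpace {
  ospace :> lmodType C;
  mnorm : forall m n, 'M[ospace]_(m, n) -> R;
  mnorm_eq0 : forall m n (x : 'M[ospace]_(m, n)), mnorm x = 0 -> x = 0;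
  mnorm_triangle : forall m n (x y : 'M[ospace]_(m, n)),
      mnorm (x + y) <= mnorm x + mnorm y;
  mnormZ : forall m n (c : C) (x : 'M[ospace]_(m, n)),
      mnorm (map_mx (fun v => c *: v) x) = cabs c * mnorm x;
  ruan1 : forall p m n q (a : 'M[C]_(p, m)) (x : 'M[ospace]_(m, n))
      (b : 'M[C]_(n, q)),
      mnorm (rmulmx (lmulmx a x) b) <= opnorm a * mnorm x * opnorm b;
  ruan2 : forall m n m' n' (x : 'M[ospace]_(m, n)) (y : 'M[ospace]_(m', n')),
      mnorm (block_mx x 0 0 y) = Num.max (mnorm x) (mnorm y)
}.

Definition ccmap (E F : opspace) (f : E -> F) : Prop :=
  lin f /\ forall m n (x : 'M[E]_(m, n)), mnorm (map_mx f x) <= mnorm x.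

Definition osp_iso (E F : opspace) (f : E -> F) : Prop :=
  ccmap f /\ exists g : F -> E, ccmap g /\ cancel f g /\ cancel g f.

(* Diagrams in OSp indexed by a preordered index set (I, le).  The
   transition maps are given as a total family e i j, only meaningful
   (and constrained) when le i j holds. *)
Definition osp_diagram (I : Type) (le : I -> I -> Prop) (E : I -> opspace)
  (e : forall i j, E i -> E j) : Prop :=
  (forall i j, le i j -> ccmap (e i j)) /\
  (forall i x, le i i -> e i i x = x) /\
  (forall i j k x, le i j -> le j k -> e i k x = e j k (e i j x)).

Definition osp_cocone (I : Type) (le : I -> I -> Prop) (E : I -> opspace)
  (e : forall i j, E i -> E j) (L : opspace) (c : forall i, E i -> L) : Prop :=
  (forall i, ccmap (c i)) /\
  (forall i j x, le i j -> c j (e i j x) = c i x).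

Definition osp_colimit (I : Type) (le : I -> I -> Prop) (E : I -> opspace)
  (e : forall i j, E i -> E j) (L : opspace) (c : forall i, E i -> L) : Prop :=
  osp_cocone le e c /\
  forall (W : opspace) (g : forall i, E i -> W), osp_cocone le e g ->
    exists! h : L -> W, ccmap h /\ forall i x, h (c i x) = g i x.

Definition bilin (U V W : lmodType C) (b : U -> V -> W) : Prop :=
  (forall v, lin (fun u => b u v)) /\ (forall u, lin (b u)).

Definition is_tensor (U V T : lmodType C) (t : U -> V -> T) : Prop :=
  bilin t /\
  forall (W : lmodType C) (b : U -> V -> W), bilin b ->
    exists! h : T -> W, lin h /\ forall u v, h (t u v) = b u v.

Definition tmulmx (U V T : lmodType C) (t : U -> V -> T) m k n
  (e : 'M[U]_(m, k)) (f : 'M[V]_(k, n)) : 'M[T]_(m, n) :=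
  \matrix_(i, l) \sum_j t (e i j) (f j l).

(* X, with t : E -> F -> X, is the (algebraic, uncompleted) Haagerup tensor
   product E (x)_h F: X is the algebraic tensor product and its matrix norms
   are the Haagerup norms. *)
Definition is_haagerup (E F X : opspace) (t : E -> F -> X) : Prop :=
  is_tensor t /\
  forall m n (x : 'M[X]_(m, n)),
    mnorm x = inf [set r : R | exists k (e : 'M[E]_(m, k)) (f : 'M[F]_(k, n)),
                                tmulmx t e f = x /\ r = mnorm e * mnorm f].

End OperatorSpaces.

Definition aleph1_directed (d : Order.disp_t) (L : porderType d) : Prop :=
  forall A : set L, countable A -> exists u : L, forall a, A a -> (a <= u)%O.

Definition prod_le (d0 d1 : Order.disp_t) (L0 : porderType d0) (L1 : porderType d1)
  (p q : L0 * L1) : Prop := (p.1 <= q.1)%O /\ (p.2 <= q.2)%O.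

(* Only directedness of the index posets matters.  The key fact is that a
   directed colimit X of operator spaces E_i is exhausted by the images of the
   stages, and that every matrix u over X lifts to a matrix over some stage with
   norm at most |u| + eps.  Indeed, the union of the images, normed by the
   infimum of the norms of lifts, again satisfies Ruan's axioms and receives a
   completely contractive cocone; the universal property makes it a retract of
   X that contains all of X.
   The canonical map is induced by the completely contractive maps
   E_i (x)_h F_j -> (colim E) (x)_h (colim F).  Its inverse linearizes the
   bilinear map (c_i x, c_j y) |-> c_(i,j) (x (x) y).  This is well defined
   because, for x of norm at most 1, y |-> c_(i,j) (x (x) y) is a completely
   contractive cocone over the F_j.  It is completely contractive because a
   factorization over the colimits lifts to a stage with norms arbitrarily
   close to the original ones. *)

From HB Require Import structures.
From mathcomp Require Import all_boot all_order all_algebra.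
From mathcomp Require Import complex.
From mathcomp Require Import boolp classical_sets cardinality reals.
From mathcomp Require Import ring.
Set Implicit Arguments.
Unset Strict Implicit.
Unset Printing Implicit Defensive.
Import Order.TTheory GRing.Theory Num.Theory.
Local Open Scope ring_scope.
Local Open Scope classical_set_scope.

Section ComplexModulus.
Variable R : realType.
Local Notation C := (complex R).

Lemma cabs2_ge0 (c : C) : 0 <= cabs2 c.
Proof. by rewrite addr_ge0 // sqr_ge0. Qed.

Lemma cabs2_0 : cabs2 (0 : C) = 0.
Proof. by rewrite /cabs2 /= expr0n addr0. Qed.

Lemma cabs_ge0 (c : C) : 0 <= cabs c.
Proof. exact: sqrtr_ge0. Qed.

Lemma cabs0 : cabs (0 : C) = 0.
Proof. by rewrite /cabs cabs2_0 sqrtr0. Qed.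

Lemma cabsM (a b : C) : cabs (a * b) = cabs a * cabs b.
Proof.
case: a b => [a1 a2] [b1 b2]; rewrite /cabs -sqrtrM ?cabs2_ge0 //.
by congr Num.sqrt; rewrite /cabs2 /=; ring.
Qed.

Lemma cabs_real (r : R) : cabs (Complex r 0) = `|r|.
Proof. by rewrite /cabs /cabs2 /= expr0n addr0 sqrtr_sqr. Qed.

Lemma cabs1 : cabs (1 : C) = 1.
Proof. by rewrite cabs_real normr1. Qed.

Lemma cabsN1 : cabs (-1 : C) = 1.
Proof. by rewrite /cabs /cabs2 /= oppr0 sqrrN expr1n expr0n addr0 sqrtr1. Qed.

End ComplexModulus.

Section LinearMaps.
Variable R : realType.
Local Notation C := (complex R).
Variables (V W : lmodType C) (f : V -> W).
Hypothesis hf : lin f.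

Lemma lin0 : f 0 = 0.
Proof.
have := hf 1 0 0; rewrite !scale1r addr0 => h.
by apply: (addrI (f 0)); rewrite addr0 -h.
Qed.

Lemma linD u v : f (u + v) = f u + f v.
Proof. by have := hf 1 u v; rewrite !scale1r. Qed.

Lemma linZ a u : f (a *: u) = a *: f u.
Proof. by have := hf a u 0; rewrite !addr0 lin0 addr0. Qed.

Lemma lin_sum (I : Type) (r : seq I) (P : pred I) (F : I -> V) :
  f (\sum_(i <- r | P i) F i) = \sum_(i <- r | P i) f (F i).
Proof. exact: (big_morph f linD lin0). Qed.

Lemma lin_map_mx0 m n : map_mx f (0 : 'M[V]_(m, n)) = 0.
Proof. by apply/matrixP => i j; rewrite !mxE lin0. Qed.

Lemma lin_map_mxD m n (x y : 'M[V]_(m, n)) :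
  map_mx f (x + y) = map_mx f x + map_mx f y.
Proof. by apply/matrixP => i j; rewrite !mxE linD. Qed.

Lemma lin_map_mxZ m n c (x : 'M[V]_(m, n)) :
  map_mx f (map_mx ( *:%R c) x) = map_mx ( *:%R c) (map_mx f x).
Proof. by apply/matrixP => i j; rewrite !mxE linZ. Qed.

Lemma lin_map_lmulmx p m n (a : 'M[C]_(p, m)) (x : 'M[V]_(m, n)) :
  map_mx f (lmulmx a x) = lmulmx a (map_mx f x).
Proof.
apply/matrixP => i j; rewrite !mxE lin_sum; apply: eq_bigr => k _.
by rewrite linZ mxE.
Qed.

Lemma lin_map_rmulmx m n q (x : 'M[V]_(m, n)) (b : 'M[C]_(n, q)) :
  map_mx f (rmulmx x b) = rmulmx (map_mx f x) b.
Proof.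
apply/matrixP => i j; rewrite !mxE lin_sum; apply: eq_bigr => k _.
by rewrite linZ mxE.
Qed.

End LinearMaps.

Lemma lin_comp (R : realType) (U V W : lmodType (complex R)) (f : U -> V) (g : V -> W) :
  lin f -> lin g -> lin (g \o f).
Proof. by move=> hf hg a u v /=; rewrite hf hg. Qed.

Section OperatorSpaceNorms.
Variable R : realType.
Variable E : opspace R.

Lemma mnorm0 m n : mnorm (0 : 'M[E]_(m, n)) = 0.
Proof.
have := mnormZ 0 (0 : 'M[E]_(m, n)); rewrite cabs0 mul0r => <-.
by congr mnorm; apply/matrixP => i j; rewrite !mxE scale0r.
Qed.

Lemma mnormN m n (x : 'M[E]_(m, n)) : mnorm (- x) = mnorm x.
Proof.
have := mnormZ (-1) x; rewrite cabsN1 mul1r => <-.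
by congr mnorm; apply/matrixP => i j; rewrite !mxE scaleN1r.
Qed.

Lemma mnorm_ge0 m n (x : 'M[E]_(m, n)) : 0 <= mnorm x.
Proof.
have := mnorm_triangle x (- x); rewrite subrr mnorm0 mnormN -mulr2n.
by rewrite -mulr_natl pmulr_rge0.
Qed.

Lemma ccmap_id : ccmap (@id E).
Proof. by split => // m n x; rewrite map_mx_id. Qed.

End OperatorSpaceNorms.

Lemma ccmap_comp (R : realType) (E F G : opspace R) (f : E -> F) (g : F -> G) :
  ccmap f -> ccmap g -> ccmap (g \o f).
Proof.
move=> [lf nf] [lg ng]; split; first exact: lin_comp.
by move=> m n x; rewrite map_mx_comp; apply: le_trans (ng _ _ _) (nf _ _ _).
Qed.

Section Compressions.
Variable R : realType.
Local Notation C := (complex R).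

Lemma l2norm0 n : l2norm (0 : 'cV[C]_n) = 0.
Proof. by rewrite /l2norm big1 ?sqrtr0 // => i _; rewrite mxE cabs2_0. Qed.

Lemma sum_cabs2_col_mx m1 m2 (u : 'cV[C]_m1) (v : 'cV[C]_m2) :
  \sum_(i < m1 + m2) cabs2 (col_mx u v i 0) =
  \sum_(i < m1) cabs2 (u i 0) + \sum_(i < m2) cabs2 (v i 0).
Proof.
by rewrite big_split_ord; congr (_ + _); apply: eq_bigr => i _; rewrite ?col_mxEu ?col_mxEd.
Qed.

Lemma l2norm_col_mx0 m1 m2 (u : 'cV[C]_m1) :
  l2norm (col_mx u (0 : 'cV[C]_m2)) = l2norm u.
Proof.
by rewrite /l2norm sum_cabs2_col_mx [X in _ + X]big1 ?addr0 // => i _; rewrite mxE cabs2_0.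
Qed.

Lemma l2norm_col_0mx m1 m2 (v : 'cV[C]_m2) :
  l2norm (col_mx (0 : 'cV[C]_m1) v) = l2norm v.
Proof.
by rewrite /l2norm sum_cabs2_col_mx [X in X + _]big1 ?add0r // => i _; rewrite mxE cabs2_0.
Qed.

Lemma l2norm_usubmx_le m1 m2 (v : 'cV[C]_(m1 + m2)) : l2norm (usubmx v) <= l2norm v.
Proof.
rewrite -{2}[v]vsubmxK /l2norm sum_cabs2_col_mx ler_sqrt ?addr_ge0 ?sumr_ge0 //.
- by rewrite lerDl sumr_ge0 // => i _; exact: cabs2_ge0.
- by move=> i _; exact: cabs2_ge0.
- by move=> i _; exact: cabs2_ge0.
Qed.

Lemma l2norm_dsubmx_le m1 m2 (v : 'cV[C]_(m1 + m2)) : l2norm (dsubmx v) <= l2norm v.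
Proof.
rewrite -{2}[v]vsubmxK /l2norm sum_cabs2_col_mx ler_sqrt ?addr_ge0 ?sumr_ge0 //.
- by rewrite lerDr sumr_ge0 // => i _; exact: cabs2_ge0.
- by move=> i _; exact: cabs2_ge0.
- by move=> i _; exact: cabs2_ge0.
Qed.

Lemma opnorm_ge0 p m (a : 'M[C]_(p, m)) : 0 <= opnorm a.
Proof.
rewrite /opnorm; set S := [set _ | _ in _].
have S0 : S 0 by exists 0; rewrite /= ?mulmx0 l2norm0.
have [hs|hs] := pselect (has_sup S); last by rewrite sup_out.
exact: sup_upper_bound.
Qed.

Lemma opnorm_le1 p m (a : 'M[C]_(p, m)) :
  (forall v, l2norm (a *m v) <= l2norm v) -> opnorm a <= 1.
Proof.
move=> h; apply: ge_sup; first by exists 0, 0; rewrite /= ?mulmx0 l2norm0.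
by move=> _ [v /= v1 <-]; apply: le_trans (h v) v1.
Qed.

Lemma opnorm_row_mx10 m1 m2 : opnorm (row_mx (1%:M : 'M[C]_m1) (0 : 'M[C]_(m1, m2))) <= 1.
Proof.
apply: opnorm_le1 => v; rewrite -{1}(vsubmxK v) mul_row_col mul1mx mul0mx addr0.
exact: l2norm_usubmx_le.
Qed.

Lemma opnorm_row_mx01 m1 m2 : opnorm (row_mx (0 : 'M[C]_(m2, m1)) (1%:M : 'M[C]_m2)) <= 1.
Proof.
apply: opnorm_le1 => v; rewrite -{1}(vsubmxK v) mul_row_col mul1mx mul0mx add0r.
exact: l2norm_dsubmx_le.
Qed.

Lemma opnorm_col_mx10 n1 n2 : opnorm (col_mx (1%:M : 'M[C]_n1) (0 : 'M[C]_(n2, n1))) <= 1.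
Proof. by apply: opnorm_le1 => v; rewrite mul_col_mx mul1mx mul0mx l2norm_col_mx0. Qed.

Lemma opnorm_col_mx01 n1 n2 : opnorm (col_mx (0 : 'M[C]_(n1, n2)) (1%:M : 'M[C]_n2)) <= 1.
Proof. by apply: opnorm_le1 => v; rewrite mul_col_mx mul1mx mul0mx l2norm_col_0mx. Qed.

Variable V : lmodType C.

Lemma lmulmx_row_mx p m1 m2 n (a : 'M[C]_(p, m1)) (b : 'M[C]_(p, m2))
    (x : 'M[V]_(m1 + m2, n)) :
  lmulmx (row_mx a b) x = lmulmx a (usubmx x) + lmulmx b (dsubmx x).
Proof.
apply/matrixP => i k; rewrite !mxE big_split_ord /=.
by congr (_ + _); apply: eq_bigr => j _; rewrite ?row_mxEl ?row_mxEr mxE.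
Qed.

Lemma rmulmx_col_mx m n1 n2 q (x : 'M[V]_(m, n1 + n2)) (a : 'M[C]_(n1, q))
    (b : 'M[C]_(n2, q)) :
  rmulmx x (col_mx a b) = rmulmx (lsubmx x) a + rmulmx (rsubmx x) b.
Proof.
apply/matrixP => i k; rewrite !mxE big_split_ord /=.
by congr (_ + _); apply: eq_bigr => j _; rewrite ?col_mxEu ?col_mxEd mxE.
Qed.

Lemma lmul1mx m n (x : 'M[V]_(m, n)) : lmulmx 1%:M x = x.
Proof.
apply/matrixP => i k; rewrite mxE (bigD1 i) //= mxE eqxx scale1r big1 ?addr0 //.
by move=> j; rewrite mxE eq_sym => /negbTE ->; rewrite scale0r.
Qed.

Lemma rmulmx1 m n (x : 'M[V]_(m, n)) : rmulmx x 1%:M = x.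
Proof.
apply/matrixP => i k; rewrite mxE (bigD1 k) //= mxE eqxx scale1r big1 ?addr0 //.
by move=> j /negbTE; rewrite mxE => ->; rewrite scale0r.
Qed.

Lemma lmul0mx p m n (x : 'M[V]_(m, n)) : lmulmx (0 : 'M[C]_(p, m)) x = 0.
Proof. by apply/matrixP => i k; rewrite !mxE big1 // => j _; rewrite mxE scale0r. Qed.

Lemma rmulmx0 m n q (x : 'M[V]_(m, n)) : rmulmx x (0 : 'M[C]_(n, q)) = 0.
Proof. by apply/matrixP => i k; rewrite !mxE big1 // => j _; rewrite mxE scale0r. Qed.

Lemma ulsubmx_compress m1 m2 n1 n2 (x : 'M[V]_(m1 + m2, n1 + n2)) :
  rmulmx (lmulmx (row_mx 1%:M 0) x) (col_mx 1%:M 0) = ulsubmx x.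
Proof. by rewrite lmulmx_row_mx lmul1mx lmul0mx addr0 rmulmx_col_mx rmulmx1 rmulmx0 addr0. Qed.

Lemma drsubmx_compress m1 m2 n1 n2 (x : 'M[V]_(m1 + m2, n1 + n2)) :
  rmulmx (lmulmx (row_mx 0 1%:M) x) (col_mx 0 1%:M) = drsubmx x.
Proof. by rewrite lmulmx_row_mx lmul1mx lmul0mx add0r rmulmx_col_mx rmulmx1 rmulmx0 add0r. Qed.

End Compressions.

Section RuanConsequences.
Variable R : realType.
Local Notation C := (complex R).
Variable E : opspace R.

Lemma mnorm_compress_le p m n q (a : 'M[C]_(p, m)) (x : 'M[E]_(m, n)) (b : 'M[C]_(n, q)) :
  opnorm a <= 1 -> opnorm b <= 1 -> mnorm (rmulmx (lmulmx a x) b) <= mnorm x.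
Proof.
move=> ha hb; apply: le_trans (ruan1 a x b) _.
rewrite -[leRHS]mul1r -[leRHS]mulr1.
by rewrite ler_pM ?mulr_ge0 ?opnorm_ge0 ?mnorm_ge0 // ler_pM ?opnorm_ge0 ?mnorm_ge0.
Qed.

Lemma mnorm_ulsubmx_le m1 m2 n1 n2 (x : 'M[E]_(m1 + m2, n1 + n2)) :
  mnorm (ulsubmx x) <= mnorm x.
Proof. by rewrite -ulsubmx_compress mnorm_compress_le ?opnorm_row_mx10 ?opnorm_col_mx10. Qed.

Lemma mnorm_drsubmx_le m1 m2 n1 n2 (x : 'M[E]_(m1 + m2, n1 + n2)) :
  mnorm (drsubmx x) <= mnorm x.
Proof. by rewrite -drsubmx_compress mnorm_compress_le ?opnorm_row_mx01 ?opnorm_col_mx01. Qed.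

Definition vscalar_mx m (v : E) : 'M[E]_m := \matrix_(i, j) (if i == j then v else 0).

Lemma vscalar_mxS m (v : E) :
  vscalar_mx m.+1 v = block_mx (const_mx v : 'M_1) 0 0 (vscalar_mx m v) :> 'M_(1 + m).
Proof.
apply/matrixP => i j; rewrite -(splitK i) -(splitK j).
case: (split i) => i'; case: (split j) => j' /=;
  rewrite ?block_mxEul ?block_mxEur ?block_mxEdl ?block_mxEdr !mxE.
- by rewrite !ord1 eqxx.
- by rewrite eqE /= ord1.
- by rewrite eqE /= ord1.
- by rewrite eqE /= eqn_add2l.
Qed.

Lemma mnorm_vscalar_mx_le m (v : E) :
  mnorm (vscalar_mx m v) <= mnorm (const_mx v : 'M[E]_1).
Proof.
elim: m => [|m IH]; first by rewrite flatmx0 mnorm0 mnorm_ge0.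
have -> : mnorm (vscalar_mx m.+1 v) =
    mnorm (block_mx (const_mx v : 'M[E]_1) 0 0 (vscalar_mx m v)) by rewrite vscalar_mxS.
by rewrite ruan2 ge_max lexx.
Qed.

Lemma exists_scale_mnorm_le1 (v : E) :
  exists2 c : C, c != 0 & mnorm (const_mx (c *: v) : 'M[E]_1) <= 1.
Proof.
pose s := mnorm (const_mx v : 'M[E]_1) + 1.
have s_gt0 : 0 < s by rewrite ltr_wpDl // mnorm_ge0.
exists (Complex s^-1 0).
  by apply/eqP => /(congr1 (@complex.Re R)) /= /eqP; rewrite invr_eq0 gt_eqF.
rewrite -map_const_mx mnormZ cabs_real ger0_norm; last by rewrite invr_ge0 ltW.
by rewrite mulrC ler_pdivrMr // mul1r lerDl.
Qed.

End RuanConsequences.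

Section TensorsAndColimits.
Variable R : realType.
Local Notation C := (complex R).

Lemma bilin_l0 (U V W : lmodType C) (t : U -> V -> W) v : bilin t -> t 0 v = 0.
Proof. by move=> ht; exact: (lin0 (ht.1 v)). Qed.

Lemma bilin_r0 (U V W : lmodType C) (t : U -> V -> W) u : bilin t -> t u 0 = 0.
Proof. by move=> ht; exact: (lin0 (ht.2 u)). Qed.

Lemma tmulmx_vscalar_mxl (E : opspace R) (V W : lmodType C) (t : E -> V -> W) m n
    (u : E) (y : 'M[V]_(m, n)) :
  bilin t -> tmulmx t (vscalar_mx m u) y = map_mx (t u) y.
Proof.
move=> ht; apply/matrixP => i l; rewrite !mxE (bigD1 i) //= mxE eqxx big1 ?addr0 //.
by move=> j /negbTE; rewrite mxE eq_sym => ->; rewrite bilin_l0.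
Qed.

Lemma tmulmx_vscalar_mxr (F : opspace R) (U W : lmodType C) (t : U -> F -> W) m n
    (x : 'M[U]_(m, n)) (v : F) :
  bilin t -> tmulmx t x (vscalar_mx n v) = map_mx (t^~ v) x.
Proof.
move=> ht; apply/matrixP => i l; rewrite !mxE (bigD1 l) //= mxE eqxx big1 ?addr0 //.
by move=> j /negbTE; rewrite mxE => ->; rewrite bilin_r0.
Qed.

Lemma lin_map_tmulmx (U V T U' V' T' : lmodType C) (t : U -> V -> T) (t' : U' -> V' -> T')
    (g : T -> T') (phi : U -> U') (psi : V -> V') :
  lin g -> (forall u v, g (t u v) = t' (phi u) (psi v)) ->
  forall m k n (x : 'M[U]_(m, k)) (y : 'M[V]_(k, n)),
  map_mx g (tmulmx t x y) = tmulmx t' (map_mx phi x) (map_mx psi y).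
Proof.
move=> lg h m k n x y; apply/matrixP => a b; rewrite !mxE (lin_sum lg).
by apply: eq_bigr => j _; rewrite h !mxE.
Qed.

Lemma tensor_lin_ext (U V T W : lmodType C) (t : U -> V -> T) (g1 g2 : T -> W) :
  is_tensor t -> lin g1 -> lin g2 -> (forall u v, g1 (t u v) = g2 (t u v)) ->
  forall z, g1 z = g2 z.
Proof.
move=> ht l1 l2 h z.
have hb : bilin (fun u v => g2 (t u v)).
  by split => [v|u]; [exact: lin_comp (ht.1.1 v) l2 | exact: lin_comp (ht.1.2 u) l2].
have [g0 [_ uniq]] := ht.2 W _ hb.
by rewrite -(uniq g1 (conj l1 h)) -(uniq g2 (conj l2 (fun u v => erefl))).
Qed.

Section Haagerup.
Variables (E F X : opspace R) (t : E -> F -> X).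
Hypothesis ht : is_haagerup t.

Lemma haagerup_mnorm_tmulmx_le m k n (x : 'M[E]_(m, k)) (y : 'M[F]_(k, n)) :
  mnorm (tmulmx t x y) <= mnorm x * mnorm y.
Proof.
rewrite ht.2; apply: ge_inf; last by exists k, x, y.
by exists 0 => _ [k' [x' [y' [_ ->]]]]; rewrite mulr_ge0 ?mnorm_ge0.
Qed.

Lemma haagerup_ccmap (Y : opspace R) (g : X -> Y) : lin g ->
  (forall m k n (x : 'M[E]_(m, k)) (y : 'M[F]_(k, n)),
     mnorm (map_mx g (tmulmx t x y)) <= mnorm x * mnorm y) ->
  ccmap g.
Proof.
move=> lg hg; split => // m n z; have := ht.2 _ _ z; set S := [set r | _] => hz.
have [[r Sr]|S0] := pselect (S !=set0).
  rewrite hz; apply: lb_le_inf; first by exists r.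
  by move=> _ [k [x [y [<- ->]]]]; exact: hg.
(* [inf set0 = 0], so a matrix admitting no factorization has norm 0. *)
have S_eq0 : S = set0 by apply/seteqP; split => // r Sr; apply: S0; exists r.
move: hz; rewrite S_eq0 inf0 => /mnorm_eq0 ->.
by rewrite (lin_map_mx0 lg) !mnorm0.
Qed.

End Haagerup.

Section Colimits.
Variables (I : Type) (le : I -> I -> Prop) (E : I -> opspace R).
Variables (e : forall i j, E i -> E j) (L : opspace R) (c : forall i, E i -> L).
Hypothesis hc : osp_colimit le e c.
Arguments c : clear implicits.

Lemma colim_ccmap_ext (W : opspace R) (g1 g2 : L -> W) :
  ccmap g1 -> ccmap g2 -> (forall i x, g1 (c i x) = g2 (c i x)) -> forall z, g1 z = g2 z.
Proof.
move=> c1 c2 h z.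
have hg2 : osp_cocone le e (fun i => g2 \o c i).
  split => [i|i j x ij /=]; first exact: ccmap_comp (hc.1.1 i) c2.
  by rewrite hc.1.2.
have [g0 [_ uniq]] := hc.2 W _ hg2.
by rewrite -(uniq g1 (conj c1 h)) -(uniq g2 (conj c2 (fun i x => erefl))).
Qed.

Lemma colim_cocone_congr (W : opspace R) (g : forall i, E i -> W) i j x y :
  osp_cocone le e g -> c i x = c j y -> g i x = g j y.
Proof. by move=> hg hxy; have [h [[_ hh] _]] := hc.2 W g hg; rewrite -!hh hxy. Qed.

End Colimits.

End TensorsAndColimits.

Lemma ler_add_mul_eps (R : realFieldType) (x y K : R) : 0 <= K ->
  (forall eps, 0 < eps -> x <= y + K * eps) -> x <= y.
Proof.
move=> K0 h; apply/ler_addgt0Pr => eps e0.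
have K1 : 0 < K + 1 by rewrite ltr_wpDl.
apply: le_trans (h (eps / (K + 1)) _) _; first by rewrite divr_gt0.
rewrite lerD2l mulrA ler_pdivrMr //.
by rewrite [X in X <= _]mulrC mulrDr mulr1 lerDl ltW.
Qed.

Lemma ler_mul_add_eps (R : realFieldType) (x a b : R) : 0 <= a -> 0 <= b ->
  (forall eps, 0 < eps -> x <= (a + eps) * (b + eps)) -> x <= a * b.
Proof.
move=> a0 b0 h; apply: (@ler_add_mul_eps _ _ _ (a + b + 1)) => [|eps e0].
  by rewrite !addr_ge0.
pose d := Num.min 1 eps.
have d0 : 0 < d by rewrite lt_min ltr01.
apply: le_trans (h d d0) _.
have -> : (a + d) * (b + d) = a * b + d * (a + b + d) by ring.
rewrite lerD2l mulrC; apply: ler_pM.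
- by rewrite !addr_ge0 // ltW.
- exact: ltW.
- by rewrite lerD2l /d ge_min lexx.
- by rewrite /d ge_min lexx orbT.
Qed.

Definition fin_directed (d : Order.disp_t) (L : porderType d) : Prop :=
  forall s : seq L, exists u : L, forall a, a \in s -> (a <= u)%O.

Lemma aleph1_directed_fin (d : Order.disp_t) (L : porderType d) :
  aleph1_directed L -> fin_directed L.
Proof.
move=> hL s; have [u hu] := hL [set a | a \in s] (finite_set_countable (finite_seq s)).
by exists u => a; exact: hu.
Qed.

Lemma fin_directed_ub2 (d : Order.disp_t) (L : porderType d) (i j : L) :
  fin_directed L -> exists2 k, (i <= k)%O & (j <= k)%O.
Proof.
by move=> hL; have [k hk] := hL [:: i; j]; exists k; apply: hk; rewrite !inE eqxx ?orbT.
Qed.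

Section DirectedColimit.
Variables (R : realType) (d : Order.disp_t) (L : porderType d).
Local Notation C := (complex R).
Hypothesis L_directed : fin_directed L.
Variables (E : L -> opspace R) (e : forall i j, E i -> E j).
Hypothesis hE : osp_diagram (fun i j : L => (i <= j)%O) e.
Variables (X : opspace R) (c : forall i, E i -> X).
Hypothesis hc : osp_colimit (fun i j : L => (i <= j)%O) e c.
Arguments e : clear implicits.
Arguments c : clear implicits.

Let c_lin {i} : lin (c i) := (hc.1.1 i).1.
Let c_cc i m n (x : 'M[E i]_(m, n)) : mnorm (map_mx (c i) x) <= mnorm x :=
  (hc.1.1 i).2 m n x.
Let c_e {i j x} : (i <= j)%O -> c j (e i j x) = c i x := hc.1.2 i j x.
Let e_cc {i j m n} {x : 'M[E i]_(m, n)} :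
  (i <= j)%O -> mnorm (map_mx (e i j) x) <= mnorm x := fun ij => (hE.1 i j ij).2 m n x.

Lemma map_c_e i j m n (x : 'M[E i]_(m, n)) :
  (i <= j)%O -> map_mx (c j) (map_mx (e i j) x) = map_mx (c i) x.
Proof. by move=> ij; apply/matrixP => a b; rewrite !mxE c_e. Qed.

Lemma lift_mx_to_stage m n (u : 'M[X]_(m, n)) :
  (forall a b, exists i x, u a b = c i x) ->
  exists i (y : 'M[E i]_(m, n)), map_mx (c i) y = u.
Proof.
move=> hu.
have hu' : forall p : 'I_m * 'I_n, exists s : {i : L & E i}, u p.1 p.2 = c (tag s) (tagged s).
  by move=> [a b]; have [i [x hx]] := hu a b; exists (Tagged E x).
have [g hg] := boolp.choice hu'.
have [k hk] := L_directed [seq tag (g p) | p <- enum [set: 'I_m * 'I_n]].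
exists k, (\matrix_(a, b) e _ k (tagged (g (a, b)))).
apply/matrixP => a b; rewrite !mxE c_e; first by rewrite (hg (a, b)).
by apply: hk; apply/mapP; exists (a, b); rewrite ?mem_enum ?inE.
Qed.

Definition in_stage_image (u : X) : bool := `[< exists i x, u = c i x >].

Lemma in_stage_imageP u : reflect (exists i x, u = c i x) (in_stage_image u).
Proof. exact: asboolP. Qed.

Lemma stage_image_closed : subsemimod_closed in_stage_image.
Proof.
split; first split.
- have [i _] := L_directed [::].
  by apply/in_stage_imageP; exists i, 0; rewrite (lin0 c_lin).
- move=> u v /in_stage_imageP [i [x ->]] /in_stage_imageP [j [y ->]].
  have [k ik jk] := fin_directed_ub2 i j L_directed.
  apply/in_stage_imageP; exists k, (e i k x + e j k y).
  by rewrite (linD c_lin) !c_e.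
- move=> a u /in_stage_imageP [i [x ->]]; apply/in_stage_imageP.
  by exists i, (a *: x); rewrite (linZ c_lin).
Qed.

Inductive stage_image : Type := StageImage (u : X) of in_stage_image u.
Definition stage_image_val (s : stage_image) := let: StageImage u _ := s in u.
HB.instance Definition _ := [isSub for stage_image_val].
HB.instance Definition _ := [Choice of stage_image by <:].
HB.instance Definition _ :=
  GRing.SubChoice_isSubLmodule.Build C X in_stage_image stage_image stage_image_closed.

Lemma stage_image_val_lin : lin stage_image_val.
Proof. by []. Qed.

Definition image_mnorm_set m n (u : 'M[stage_image]_(m, n)) : set R :=
  [set r | exists i (y : 'M[E i]_(m, n)),
     map_mx (c i) y = map_mx stage_image_val u /\ r = mnorm y].

Definition image_mnorm m n (u : 'M[stage_image]_(m, n)) : R := inf (image_mnorm_set u).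

Section ImageMnorm.
Variables m n : nat.
Implicit Types u v : 'M[stage_image]_(m, n).

Lemma image_mnorm_set_neq0 u : image_mnorm_set u !=set0.
Proof.
have [i [y hy]] : exists i (y : 'M[E i]_(m, n)), map_mx (c i) y = map_mx stage_image_val u.
  by apply: lift_mx_to_stage => a b; rewrite mxE; case: (u a b) => w /= /in_stage_imageP.
by exists (mnorm y), i, y.
Qed.

Lemma image_mnorm_set_lbound u : has_lbound (image_mnorm_set u).
Proof. by exists 0 => _ [i [y [_ ->]]]; exact: mnorm_ge0. Qed.

Lemma image_mnorm_le u i (y : 'M[E i]_(m, n)) :
  map_mx (c i) y = map_mx stage_image_val u -> image_mnorm u <= mnorm y.
Proof. by move=> hy; apply: ge_inf; [exact: image_mnorm_set_lbound | exists i, y]. Qed.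

Lemma image_mnorm_approx u eps : 0 < eps ->
  exists i (y : 'M[E i]_(m, n)),
    map_mx (c i) y = map_mx stage_image_val u /\ mnorm y < image_mnorm u + eps.
Proof.
move=> e0; have [_ [i [y [hy ->]]] hl] :=
  inf_adherent e0 (conj (image_mnorm_set_neq0 u) (image_mnorm_set_lbound u)).
by exists i, y.
Qed.

Lemma mnorm_val_le_image_mnorm u : mnorm (map_mx stage_image_val u) <= image_mnorm u.
Proof.
apply: lb_le_inf; first exact: image_mnorm_set_neq0.
by move=> _ [i [y [<- ->]]]; exact: c_cc.
Qed.

Lemma image_mnorm_ge0 u : 0 <= image_mnorm u.
Proof. exact: le_trans (mnorm_ge0 _) (mnorm_val_le_image_mnorm u). Qed.

Lemma image_mnorm_eq0 u : image_mnorm u = 0 -> u = 0.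
Proof.
move=> u0; have : mnorm (map_mx stage_image_val u) = 0.
  by apply/eqP; rewrite eq_le mnorm_ge0 andbT -u0 mnorm_val_le_image_mnorm.
move/mnorm_eq0/matrixP => hu; apply/matrixP => a b; apply: val_inj.
by have := hu a b; rewrite !mxE.
Qed.

Lemma image_mnorm_triangle u v : image_mnorm (u + v) <= image_mnorm u + image_mnorm v.
Proof.
apply: (@ler_add_mul_eps _ _ _ 2) => // eps e0.
have [i [x [hx nx]]] := image_mnorm_approx u e0.
have [j [y [hy ny]]] := image_mnorm_approx v e0.
have [k ik jk] := fin_directed_ub2 i j L_directed.
apply: le_trans (image_mnorm_le (y := map_mx (e i k) x + map_mx (e j k) y) _) _.
  by rewrite (lin_map_mxD c_lin) !map_c_e // hx hy (lin_map_mxD stage_image_val_lin).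
apply: le_trans (mnorm_triangle _ _) _.
rewrite mulr2n mulrDl mul1r addrACA; apply: lerD.
  by apply/ltW; apply: le_lt_trans (e_cc ik) nx.
by apply/ltW; apply: le_lt_trans (e_cc jk) ny.
Qed.

Lemma image_mnormZ_le a u : image_mnorm (map_mx ( *:%R a) u) <= cabs a * image_mnorm u.
Proof.
apply: (@ler_add_mul_eps _ _ _ (cabs a)); first exact: cabs_ge0.
move=> eps e0; have [i [y [hy ny]]] := image_mnorm_approx u e0.
apply: le_trans (image_mnorm_le (y := map_mx ( *:%R a) y) _) _.
  by rewrite (lin_map_mxZ c_lin) hy (lin_map_mxZ stage_image_val_lin).
by rewrite mnormZ -mulrDr ler_wpM2l ?cabs_ge0 ?ltW.
Qed.

Lemma image_mnormZ a u : image_mnorm (map_mx ( *:%R a) u) = cabs a * image_mnorm u.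
Proof.
apply/eqP; rewrite eq_le image_mnormZ_le /=.
have [->|a0] := eqVneq a 0; first by rewrite cabs0 mul0r image_mnorm_ge0.
have {1}-> : u = map_mx ( *:%R a^-1) (map_mx ( *:%R a) u).
  by apply/matrixP => i j; rewrite !mxE scalerA mulVf // scale1r.
apply: le_trans (ler_wpM2l (cabs_ge0 a) (image_mnormZ_le a^-1 _)) _.
by rewrite mulrA -cabsM mulfV // cabs1 mul1r.
Qed.

End ImageMnorm.

Lemma image_mnorm_ruan1 p m n q (a : 'M[C]_(p, m)) (u : 'M[stage_image]_(m, n))
    (b : 'M[C]_(n, q)) :
  image_mnorm (rmulmx (lmulmx a u) b) <= opnorm a * image_mnorm u * opnorm b.
Proof.
apply: (@ler_add_mul_eps _ _ _ (opnorm a * opnorm b)); first by rewrite mulr_ge0 ?opnorm_ge0.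
move=> eps e0; have [i [y [hy ny]]] := image_mnorm_approx u e0.
apply: le_trans (image_mnorm_le (y := rmulmx (lmulmx a y) b) _) _.
  by rewrite (lin_map_rmulmx c_lin) (lin_map_lmulmx c_lin) hy
    (lin_map_rmulmx stage_image_val_lin) (lin_map_lmulmx stage_image_val_lin).
apply: le_trans (ruan1 a y b) _.
have -> : opnorm a * image_mnorm u * opnorm b + opnorm a * opnorm b * eps =
    opnorm a * (image_mnorm u + eps) * opnorm b by ring.
by rewrite ler_wpM2r ?opnorm_ge0 // ler_wpM2l ?opnorm_ge0 ?ltW.
Qed.

Lemma image_mnorm_ruan2 m n m' n' (u : 'M[stage_image]_(m, n))
    (v : 'M[stage_image]_(m', n')) :
  image_mnorm (block_mx u 0 0 v) = Num.max (image_mnorm u) (image_mnorm v).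
Proof.
apply/eqP; rewrite eq_le; apply/andP; split.
  apply/ler_addgt0Pr => eps e0.
  have [i [x [hx nx]]] := image_mnorm_approx u e0.
  have [j [y [hy ny]]] := image_mnorm_approx v e0.
  have [k ik jk] := fin_directed_ub2 i j L_directed.
  apply: le_trans
    (image_mnorm_le (y := block_mx (map_mx (e i k) x) 0 0 (map_mx (e j k) y)) _) _.
    by rewrite !map_block_mx !map_c_e // hx hy !(lin_map_mx0 c_lin)
      !(lin_map_mx0 stage_image_val_lin).
  rewrite ruan2 ge_max; apply/andP; split.
    by apply: le_trans (ltW (le_lt_trans (e_cc ik) nx)) _; rewrite lerD2r le_max lexx.
  by apply: le_trans (ltW (le_lt_trans (e_cc jk) ny)) _; rewrite lerD2r le_max lexx orbT.
apply: lb_le_inf; first exact: image_mnorm_set_neq0.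
move=> _ [k [z [hz ->]]]; rewrite ge_max; apply/andP; split.
  apply: le_trans (mnorm_ulsubmx_le z); apply: image_mnorm_le.
  by rewrite map_ulsubmx hz map_block_mx block_mxKul.
apply: le_trans (mnorm_drsubmx_le z); apply: image_mnorm_le.
by rewrite map_drsubmx hz map_block_mx block_mxKdr.
Qed.

Definition image_opspace : opspace R :=
  OpSpace image_mnorm_eq0 image_mnorm_triangle image_mnormZ image_mnorm_ruan1
    image_mnorm_ruan2.

Definition stage_to_image i (x : E i) : image_opspace :=
  StageImage (introT (in_stage_imageP (c i x)) (ex_intro _ i (ex_intro _ x erefl))).

Lemma stage_to_image_cocone : osp_cocone (fun i j : L => (i <= j)%O) e stage_to_image.
Proof.
split=> [i|i j x ij]; last by apply: val_inj; rewrite /= c_e.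
split=> [a x y|m n x]; first by apply: val_inj; rewrite /= c_lin.
by apply: image_mnorm_le; apply/matrixP => a b; rewrite !mxE.
Qed.

(* The universal map h into the image satisfies stage_image_val \o h = id by
   uniqueness in the universal property, both maps being the identity on stages. *)
Lemma colim_image_retraction :
  exists h : X -> image_opspace, ccmap h /\ forall u, stage_image_val (h u) = u.
Proof.
have [h [[h_cc hh] _]] := hc.2 image_opspace stage_to_image stage_to_image_cocone.
have val_h_cc : ccmap (stage_image_val \o h).
  split; first exact: lin_comp h_cc.1 stage_image_val_lin.
  by move=> m n u; rewrite map_mx_comp; apply: le_trans (mnorm_val_le_image_mnorm _) (h_cc.2 _ _ u).
exists h; split=> // u.
apply: (colim_ccmap_ext hc val_h_cc (ccmap_id X)) => i x /=.
by rewrite hh.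
Qed.

Lemma directed_colim_surj (u : X) : exists i x, u = c i x.
Proof.
have [h [_ hh]] := colim_image_retraction.
by rewrite -(hh u); case: (h u) => v /= /in_stage_imageP.
Qed.

Lemma directed_colim_lift_mx m n (u : 'M[X]_(m, n)) eps : 0 < eps ->
  exists i (y : 'M[E i]_(m, n)), map_mx (c i) y = u /\ mnorm y < mnorm u + eps.
Proof.
move=> e0; have [h [h_cc hh]] := colim_image_retraction.
have [i [y [hy ny]]] := image_mnorm_approx (map_mx h u) e0.
exists i, y; split; first by rewrite hy; apply/matrixP => a b; rewrite !mxE hh.
by apply: lt_le_trans ny _; rewrite lerD2r; exact: h_cc.2.
Qed.

End DirectedColimit.

Section HaagerupColimit.
Local Unset Implicit Arguments.
Variables (R : realType) (d0 d1 : Order.disp_t) (L0 : porderType d0) (L1 : porderType d1).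
Hypotheses (L0_directed : fin_directed L0) (L1_directed : fin_directed L1).
Variables (E : L0 -> opspace R) (e : forall i j, E i -> E j).
Hypothesis hE : osp_diagram (fun i j : L0 => (i <= j)%O) e.
Variables (F : L1 -> opspace R) (f : forall i j, F i -> F j).
Hypothesis hF : osp_diagram (fun i j : L1 => (i <= j)%O) f.
Variables (LE : opspace R) (cE : forall i, E i -> LE).
Hypothesis hLE : osp_colimit (fun i j : L0 => (i <= j)%O) e cE.
Variables (LF : opspace R) (cF : forall i, F i -> LF).
Hypothesis hLF : osp_colimit (fun i j : L1 => (i <= j)%O) f cF.
Variables (H : L0 -> L1 -> opspace R) (tH : forall i j, E i -> F j -> H i j).
Hypothesis hH : forall i j, is_haagerup (tH i j).
Variable hmap : forall p q : L0 * L1, H p.1 p.2 -> H q.1 q.2.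
Hypothesis hhmap : forall p q : L0 * L1, prod_le p q ->
  lin (hmap p q) /\
  forall x y, hmap p q (tH p.1 p.2 x y) = tH q.1 q.2 (e p.1 q.1 x) (f p.2 q.2 y).
Variables (LH : opspace R) (cH : forall p : L0 * L1, H p.1 p.2 -> LH).
Hypothesis hLH : osp_colimit (E := fun p : L0 * L1 => H p.1 p.2) (@prod_le d0 d1 L0 L1) hmap cH.
Variables (T : opspace R) (tT : LE -> LF -> T).
Hypothesis hT : is_haagerup tT.
Local Set Implicit Arguments.

Let cE_lin {i} : lin (cE i) := (hLE.1.1 i).1.
Let cF_lin {j} : lin (cF j) := (hLF.1.1 j).1.
Let cH_lin {p} : lin (cH p) := (hLH.1.1 p).1.
Let cH_cc {p m n} (w : 'M[H p.1 p.2]_(m, n)) : mnorm (map_mx (cH p) w) <= mnorm w :=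
  (hLH.1.1 p).2 m n w.
Let tH_bilin {i j} : bilin (tH i j) := (hH i j).1.1.

Lemma tH_left_cocone i (x : E i) : mnorm (const_mx x : 'M_1) <= 1 ->
  osp_cocone (fun j j' : L1 => (j <= j')%O) f (fun j y => cH (i, j) (tH i j x y)).
Proof.
move=> x1; split=> [j|j j' y jj'].
  split=> [|m n y]; first exact: lin_comp (tH_bilin.2 x) (@cH_lin (i, j)).
  rewrite map_mx_comp -(tmulmx_vscalar_mxl _ _ tH_bilin).
  apply: le_trans (cH_cc _) _; apply: le_trans (haagerup_mnorm_tmulmx_le (hH i j) _ _) _.
  rewrite -[leRHS]mul1r ler_wpM2r ?mnorm_ge0 //.
  exact: le_trans (mnorm_vscalar_mx_le m x) x1.
have ij' : prod_le (i, j) (i, j') by split.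
have := (hhmap _ _ ij').2 x y; rewrite /= hE.2.1 // => <-.
exact: hLH.1.2 _ _ _ ij'.
Qed.

Lemma tH_right_cocone j (y : F j) : mnorm (const_mx y : 'M_1) <= 1 ->
  osp_cocone (fun i i' : L0 => (i <= i')%O) e (fun i x => cH (i, j) (tH i j x y)).
Proof.
move=> y1; split=> [i|i i' x ii'].
  split=> [|m n x]; first exact: lin_comp (tH_bilin.1 y) (@cH_lin (i, j)).
  rewrite map_mx_comp -(tmulmx_vscalar_mxr _ _ tH_bilin).
  apply: le_trans (cH_cc _) _; apply: le_trans (haagerup_mnorm_tmulmx_le (hH i j) _ _) _.
  rewrite -[leRHS]mulr1 ler_wpM2l ?mnorm_ge0 //.
  exact: le_trans (mnorm_vscalar_mx_le n y) y1.
have ii'j : prod_le (i, j) (i', j) by split.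
have := (hhmap _ _ ii'j).2 x y; rewrite /= hF.2.1 // => <-.
exact: hLH.1.2 _ _ _ ii'j.
Qed.

Lemma cH_tH_congr_r i (x : E i) j j' y y' :
  cF j y = cF j' y' -> cH (i, j) (tH i j x y) = cH (i, j') (tH i j' x y').
Proof.
move=> hy; have [a a0 ax1] := exists_scale_mnorm_le1 x.
have -> : x = a^-1 *: (a *: x) by rewrite scalerA mulVf // scale1r.
rewrite (linZ (tH_bilin.1 y)) (linZ (tH_bilin.1 y')) !(linZ cH_lin).
by rewrite (colim_cocone_congr hLF (tH_left_cocone ax1) hy).
Qed.

Lemma cH_tH_congr_l j (y : F j) i i' x x' :
  cE i x = cE i' x' -> cH (i, j) (tH i j x y) = cH (i', j) (tH i' j x' y).
Proof.
move=> hx; have [a a0 ay1] := exists_scale_mnorm_le1 y.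
have -> : y = a^-1 *: (a *: y) by rewrite scalerA mulVf // scale1r.
rewrite (linZ (tH_bilin.2 x)) (linZ (tH_bilin.2 x')) !(linZ cH_lin).
by rewrite (colim_cocone_congr hLE (tH_right_cocone ay1) hx).
Qed.

Lemma cH_tH_congr i i' j j' x x' y y' : cE i x = cE i' x' -> cF j y = cF j' y' ->
  cH (i, j) (tH i j x y) = cH (i', j') (tH i' j' x' y').
Proof. by move=> hx hy; rewrite (cH_tH_congr_r x hy) (cH_tH_congr_l y' hx). Qed.


Lemma stage_to_tensor_exists p : exists g : H p.1 p.2 -> T,
  ccmap g /\ forall x y, g (tH p.1 p.2 x y) = tT (cE p.1 x) (cF p.2 y).
Proof.
have hb : bilin (fun x y => tT (cE p.1 x) (cF p.2 y)).
  split=> [y|x]; first exact: lin_comp cE_lin (hT.1.1.1 _).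
  exact: lin_comp cF_lin (hT.1.1.2 _).
have [g [[g_lin g_t] _]] := (hH p.1 p.2).1.2 T _ hb.
exists g; split=> //; apply: (haagerup_ccmap (hH p.1 p.2)) => // m k n x y.
rewrite (lin_map_tmulmx g_lin g_t).
apply: le_trans (haagerup_mnorm_tmulmx_le hT _ _) _.
by rewrite ler_pM ?mnorm_ge0 //; [exact: (hLE.1.1 _).2 | exact: (hLF.1.1 _).2].
Qed.

Lemma canonical_map_exists : exists phi : LH -> T,
  ccmap phi /\ forall p x y, phi (cH p (tH p.1 p.2 x y)) = tT (cE p.1 x) (cF p.2 y).
Proof.
pose g p := sval (cid (stage_to_tensor_exists p)).
have hg p : ccmap (g p) /\ forall x y, g p (tH p.1 p.2 x y) = tT (cE p.1 x) (cF p.2 y).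
  exact: svalP (cid (stage_to_tensor_exists p)).
have g_cocone : osp_cocone (@prod_le d0 d1 L0 L1) hmap g.
  split=> [p|p q w pq]; first exact: (hg p).1.
  apply: (tensor_lin_ext (hH p.1 p.2).1 (lin_comp (hhmap p q pq).1 (hg q).1.1) (hg p).1.1).
  move=> x y /=; rewrite (hhmap p q pq).2 (hg q).2 (hg p).2.
  by rewrite (hLE.1.2 _ _ x pq.1) (hLF.1.2 _ _ y pq.2).
have [phi [[phi_cc phi_g] _]] := hLH.2 T g g_cocone.
by exists phi; split=> // p x y; rewrite phi_g (hg p).2.
Qed.

Lemma colim_tensor_map_exists : exists b : LE -> LF -> LH,
  forall i j x y, b (cE i x) (cF j y) = cH (i, j) (tH i j x y).
Proof.
have exE u : exists s : {i : L0 & E i}, u = cE (tag s) (tagged s).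
  by have [i [x ->]] := directed_colim_surj L0_directed hE hLE u; exists (Tagged E x).
have exF v : exists s : {j : L1 & F j}, v = cF (tag s) (tagged s).
  by have [j [y ->]] := directed_colim_surj L1_directed hF hLF v; exists (Tagged F y).
have [[sE hsE] [sF hsF]] := (boolp.choice exE, boolp.choice exF).
exists (fun u v => cH (tag (sE u), tag (sF v)) (tH _ _ (tagged (sE u)) (tagged (sF v)))).
by move=> i j x y; apply: cH_tH_congr; [exact/esym/hsE | exact/esym/hsF].
Qed.

Section ColimTensorMap.
Variable b : LE -> LF -> LH.
Hypothesis b_cH : forall i j x y, b (cE i x) (cF j y) = cH (i, j) (tH i j x y).

Lemma colim_tensor_map_bilin : bilin b.
Proof.
split=> [v a u u'|u a v v'].
  have [j [y ->]] := directed_colim_surj L1_directed hF hLF v.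
  have [i [x ->]] := directed_colim_surj L0_directed hE hLE u.
  have [i' [x' ->]] := directed_colim_surj L0_directed hE hLE u'.
  have [k ik i'k] := fin_directed_ub2 i i' L0_directed.
  rewrite -(hLE.1.2 _ _ x ik) -(hLE.1.2 _ _ x' i'k) -(linZ cE_lin) -(linD cE_lin) !b_cH.
  by rewrite (tH_bilin.1 y) (@cH_lin (k, j)).
have [i [x ->]] := directed_colim_surj L0_directed hE hLE u.
have [j [y ->]] := directed_colim_surj L1_directed hF hLF v.
have [j' [y' ->]] := directed_colim_surj L1_directed hF hLF v'.
have [k jk j'k] := fin_directed_ub2 j j' L1_directed.
rewrite -(hLF.1.2 _ _ y jk) -(hLF.1.2 _ _ y' j'k) -(linZ cF_lin) -(linD cF_lin) !b_cH.
by rewrite (tH_bilin.2 x) (@cH_lin (i, k)).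
Qed.

(* A factorization [x (.) y] over the colimits is lifted to a stage, where the
   Haagerup norm is at most the product of the norms of the lifts. *)
Lemma colim_tensor_map_ccmap (g : T -> LH) :
  lin g -> (forall u v, g (tT u v) = b u v) -> ccmap g.
Proof.
move=> g_lin g_t; apply: (haagerup_ccmap hT) => // m k n x y.
rewrite (lin_map_tmulmx (phi := id) (psi := id) g_lin g_t) !map_mx_id //.
apply: ler_mul_add_eps; rewrite ?mnorm_ge0 // => eps e0.
have [i [x' [hx nx]]] := directed_colim_lift_mx L0_directed hE hLE x e0.
have [j [y' [hy ny]]] := directed_colim_lift_mx L1_directed hF hLF y e0.
have -> : tmulmx b x y = map_mx (cH (i, j)) (tmulmx (tH i j) x' y').
  by rewrite (lin_map_tmulmx (@cH_lin (i, j)) (fun u v => esym (b_cH u v))) hx hy.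
apply: le_trans (cH_cc _) _; apply: le_trans (haagerup_mnorm_tmulmx_le (hH i j) _ _) _.
by rewrite ler_pM ?mnorm_ge0 ?ltW.
Qed.

End ColimTensorMap.

Lemma inverse_map_exists : exists g : T -> LH,
  ccmap g /\ forall i j x y, g (tT (cE i x) (cF j y)) = cH (i, j) (tH i j x y).
Proof.
have [b b_cH] := colim_tensor_map_exists.
have [g [[g_lin g_t] _]] := hT.1.2 LH b (colim_tensor_map_bilin b_cH).
exists g; split=> [|i j x y]; last by rewrite g_t b_cH.
exact (colim_tensor_map_ccmap b_cH g_lin g_t).
Qed.

Lemma canonical_map_iso : exists phi : LH -> T,
  (forall p x y, phi (cH p (tH p.1 p.2 x y)) = tT (cE p.1 x) (cF p.2 y)) /\ osp_iso phi.
Proof.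
have [phi [phi_cc phi_t]] := canonical_map_exists.
have [g [g_cc g_t]] := inverse_map_exists.
exists phi; split=> //; split=> //; exists g; split=> //; split.
  apply: (colim_ccmap_ext hLH (ccmap_comp phi_cc g_cc) (ccmap_id LH)) => -[i j] w /=.
  have cH_ij_lin := @cH_lin (i, j).
  apply: (tensor_lin_ext (hH i j).1 (lin_comp (lin_comp cH_ij_lin phi_cc.1) g_cc.1) cH_ij_lin).
  by move=> x y /=; rewrite phi_t g_t.
apply: (tensor_lin_ext hT.1 (lin_comp g_cc.1 phi_cc.1) (ccmap_id T).1) => u v /=.
have [i [x ->]] := directed_colim_surj L0_directed hE hLE u.
have [j [y ->]] := directed_colim_surj L1_directed hF hLF v.
by rewrite g_t (phi_t (i, j)).
Qed.

End HaagerupColimit.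

Local Close Scope classical_set_scope.
Local Close Scope ring_scope.

Theorem lemma2p5 (R : realType)
  (d0 d1 : Order.disp_t) (L0 : porderType d0) (L1 : porderType d1)
  (hL0 : aleph1_directed L0) (hL1 : aleph1_directed L1)
  (* the diagram (E_l0) over L0 *)
  (E : L0 -> opspace R) (e : forall i j, E i -> E j)
  (hE : osp_diagram (fun i j : L0 => (i <= j)%O) e)
  (* the diagram (F_l1) over L1 *)
  (F : L1 -> opspace R) (f : forall i j, F i -> F j)
  (hF : osp_diagram (fun i j : L1 => (i <= j)%O) f)
  (* colim E and colim F *)
  (LE : opspace R) (cE : forall i, E i -> LE)
  (hLE : osp_colimit (fun i j : L0 => (i <= j)%O) e cE)
  (LF : opspace R) (cF : forall i, F i -> LF)
  (hLF : osp_colimit (fun i j : L1 => (i <= j)%O) f cF)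
  (* the Haagerup tensor products E_l0 (x)_h F_l1 *)
  (H : L0 -> L1 -> opspace R) (tH : forall i j, E i -> F j -> H i j)
  (hH : forall i j, is_haagerup (tH i j))
  (* the induced diagram over L0 x L1, with maps e_{l0 m0} (x) f_{l1 m1} *)
  (hmap : forall p q : L0 * L1, H p.1 p.2 -> H q.1 q.2)
  (hhmap : forall p q : L0 * L1, prod_le p q ->
     lin (hmap p q) /\
     forall x y, hmap p q (tH p.1 p.2 x y) = tH q.1 q.2 (e p.1 q.1 x) (f p.2 q.2 y))
  (* its colimit *)
  (LH : opspace R) (cH : forall p : L0 * L1, H p.1 p.2 -> LH)
  (hLH : osp_colimit (E := fun p : L0 * L1 => H p.1 p.2) (@prod_le d0 d1 L0 L1) hmap cH)
  (* (colim E) (x)_h (colim F) *)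
  (T : opspace R) (tT : LE -> LF -> T) (hT : is_haagerup tT) :
  exists phi : LH -> T,
    (forall (p : L0 * L1) (x : E p.1) (y : F p.2),
        phi (cH p (tH p.1 p.2 x y)) = tT (cE p.1 x) (cF p.2 y)) /\
    osp_iso phi.
Proof.
exact (canonical_map_iso (aleph1_directed_fin hL0) (aleph1_directed_fin hL1)
  hE hF hLE hLF hH hhmap hLH hT).
Qed.
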